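(* Let $f(x,y)=\sum_{i,j=-\infty}^{\infty}\lambda(i,j)x^iy^j$ and $g(x,y)=\sum_{i,j=-\infty}^{\infty}c(i,j)x^iy^j$ be two nonzero bilateral formal series with $g(x,y)=-g(y,x)$. If $f\perp g$, then $g\perp g$.
   Context: A bilateral formal series in $x,y$ is a formal expression $\sum_{i,j\in\mathbb{Z}}c(i,j)x^iy^j$ with complex coefficients; $g(x,y)=-g(y,x)$ means $c(i,j)=-c(j,i)$ for all $i,j$. For two such series $f,g$, the expression $g(u,v)f(z,w)-g(u,w)f(z,v)+g(v,w)f(z,u)$ is a well-defined formal series in four independent variables $u,v,w,z$. One writes $f\perp g$ if this expression is identically zero. *)

From HB Require Import structures.
From mathcomp Require Import all_boot all_order all_algebra.
From mathcomp Require Import reals.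
From mathcomp Require Import complex.
Set Implicit Arguments. Unset Strict Implicit. Unset Printing Implicit Defensive.
Import Order.TTheory GRing.Theory Num.Theory.
Local Open Scope ring_scope.
Local Open Scope complex_scope.

(* A bilateral formal series sum_{i,j in Z} c(i,j) x^i y^j with complex
   coefficients (C = R[i] for a real-number type R : realType) is
   represented by its coefficient function c : int -> int -> C. *)
Definition bseries (R : realType) := int -> int -> R[i].

Definition bs_nonzero (R : realType) (f : bseries R) : Prop :=
  exists i j, f i j != 0.

Definition bs_antisym (R : realType) (g : bseries R) : Prop :=
  forall i j, g i j = - g j i.

(* Coefficient of u^a v^b w^c z^d in
   g(u,v) f(z,w) - g(u,w) f(z,v) + g(v,w) f(z,u). *)
Definition perp_coef (R : realType) (f g : bseries R) (a b c d : int) : R[i] :=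
  g a b * f d c - g a c * f d b + g b c * f d a.

Definition bs_perp (R : realType) (f g : bseries R) : Prop :=
  forall a b c d, perp_coef f g a b c d = 0.

(* If f(d0,e0) <> 0, the coefficients of u^a v^b w^e0 z^d0 in the relation
   f ⊥ g express g as the wedge product psi ∧ phi of phi = f(d0, .) and
   psi = g(., e0) / f(d0, e0).  Every such wedge product is orthogonal to
   itself: the three-term expression is then a Plücker-type identity. *)
From HB Require Import structures.
From mathcomp Require Import all_boot all_order all_algebra.
From mathcomp Require Import reals complex.
From mathcomp Require Import ring.
Set Implicit Arguments. Unset Strict Implicit. Unset Printing Implicit Defensive.
Import GRing.Theory.
Local Open Scope ring_scope.

Definition bs_wedge (R : realType) (psi phi : int -> R[i]) : bseries R :=
  fun a b => psi a * phi b - psi b * phi a.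

Lemma bs_perp_wedge (R : realType) (psi phi : int -> R[i]) :
  bs_perp (bs_wedge psi phi) (bs_wedge psi phi).
Proof. by move=> a b c d; rewrite /perp_coef /bs_wedge; ring. Qed.

Lemma perp_coef_eq0_wedge (R : realType) (f g : bseries R) (d0 e0 : int) :
  f d0 e0 != 0 -> (forall a b, perp_coef f g a b e0 d0 = 0) ->
  forall a b, g a b = bs_wedge (fun a => g a e0 / f d0 e0) (f d0) a b.
Proof.
move=> f_neq0 perp_fg a b; apply: (mulIf f_neq0).
have := perp_fg a b; rewrite /perp_coef => coef_eq0.
have -> : g a b * f d0 e0 = g a e0 * f d0 b - g b e0 * f d0 a.
  by apply/eqP; rewrite -subr_eq0 -coef_eq0; apply/eqP; ring.
by rewrite mulrBl !(mulrAC _ _ (f d0 e0)) !mulfK.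
Qed.

Theorem lemma2p4 (R : realType) (f g : bseries R) :
  bs_nonzero f -> bs_nonzero g -> bs_antisym g ->
  bs_perp f g -> bs_perp g g.
Proof.
move=> [d0 [e0 f_neq0]] _ _ perp_fg a b c d.
have g_wedge := perp_coef_eq0_wedge f_neq0 (fun a b => perp_fg a b e0 d0).
rewrite /perp_coef !g_wedge.
exact: bs_perp_wedge.
Qed.
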